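(* Let $\mathcal B$ be a multiplicative family of entourages on a set $X$. For all integers $n\ge k>1$ and all $U_1,\dots,U_n\in\mathcal B$, $$\Pi(U_1,\dots,U_n)=\Pi(U_1,\dots,U_{k-1},\Pi(U_k,\dots,U_n)).$$
   Context: An entourage on $X$ is a subset of $X\times X$ containing the diagonal; $U\circ V=\{(x,z):\exists y\,((x,y)\in U,(y,z)\in V)\}$. A family $\mathcal B$ of entourages is multiplicative if $U\circ V\in\mathcal B$ whenever $U,V\in\mathcal B$. The balanced product is defined recursively: $\Pi(U_1)=U_1$ and, for $n>1$, $\Pi(U_1,\dots,U_n)=\Pi(U_2,\dots,U_n)\circ U_1\circ\Pi(U_2,\dots,U_n)$. *)

From mathcomp Require Import all_boot.
Set Implicit Arguments. Unset Strict Implicit. Unset Printing Implicit Defensive.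

Definition relX (X : Type) := X -> X -> Prop.

Definition diagX (X : Type) : relX X := fun x y => x = y.

Definition is_entourage (X : Type) (U : relX X) : Prop := forall x, U x x.

Definition rcomp (X : Type) (U V : relX X) : relX X :=
  fun x z => exists y, U x y /\ V y z.

Definition entourage_family (X : Type) (B : relX X -> Prop) : Prop :=
  forall U, B U -> is_entourage U.

Definition multiplicative (X : Type) (B : relX X -> Prop) : Prop :=
  forall U V, B U -> B V -> B (rcomp U V).

(* Balanced product of a list [:: U1; ...; Un]:
   Pi [:: U1] = U1,  Pi (U1 :: s) = Pi s o U1 o Pi s  for s nonempty.
   (The empty list is never used; it is sent to the diagonal.) *)
Fixpoint bprod (X : Type) (s : seq (relX X)) : relX X :=
  match s with
  | [::] => @diagX X
  | U1 :: s' =>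
      match s' with
      | [::] => U1
      | _ :: _ => rcomp (rcomp (bprod s') U1) (bprod s')
      end
  end.

From mathcomp Require Import all_boot.
From mathcomp Require Import zify.

(* Splitting off a nonempty tail [t] and collapsing it to [bprod t] commutes
   with the recursion of [bprod], which only ever inspects the head of the list. *)

Lemma bprod_cons2 (X : Type) (U V : relX X) (s : seq (relX X)) :
  bprod [:: U, V & s] = rcomp (rcomp (bprod (V :: s)) U) (bprod (V :: s)).
Proof. by []. Qed.

Lemma bprod_cat (X : Type) (s t : seq (relX X)) : 0 < size t ->
  bprod (s ++ t) = bprod (rcons s (bprod t)).
Proof.
move=> t_gt0; elim: s => [|U [|V s] IHs] //.
  by case: t t_gt0 {IHs}.
by rewrite cat_cons rcons_cons !bprod_cons2 -cat_cons -rcons_cons IHs.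
Qed.

Theorem lemma1p7 (X : Type) (B : relX X -> Prop)
  (HB : entourage_family B) (Hmul : multiplicative B)
  (n k : nat) (U : nat -> relX X)
  (Hk : 1 < k) (Hkn : k <= n)
  (HU : forall i, 1 <= i <= n -> B (U i)) :
  bprod [seq U i | i <- iota 1 n] =
  bprod (rcons [seq U i | i <- iota 1 (k - 1)]
               (bprod [seq U i | i <- iota k (n - k + 1)])).
Proof.
rewrite -bprod_cat; last by rewrite size_map size_iota addn1.
have n_split : n = (k - 1) + (n - k + 1) by lia.
have k_eq : 1 + (k - 1) = k by lia.
by rewrite -map_cat [in LHS]n_split iotaD k_eq.
Qed.
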